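(* Let $Z\in\{0,1\}$, $S(1),S(0)\in\{0,1\}$ and a covariate vector $\mathbf{X}$ be random variables with $Z\perp\!\!\!\perp\{S(1),S(0),\mathbf{X}\}$ and observed $S=S(Z)$. Assume Monotonicity, $S(1)\ge S(0)$ almost surely. Then for any function $h$ of the covariates (with finite moments), $$E\{w_{1,s\bar{s}}(\mathbf{X})h(\mathbf{X})\mid Z=1,S=1\} = E\{w_{0,s\bar{s}}(\mathbf{X})h(\mathbf{X})\mid Z=0,S=0\},$$ $$E\{h(\mathbf{X})\mid Z=1,S=0\} = E\{w_{0,\bar{s}\bar{s}}(\mathbf{X})h(\mathbf{X})\mid Z=0,S=0\},$$ $$E\{w_{1,ss}(\mathbf{X})h(\mathbf{X})\mid Z=1,S=1\} = E\{h(\mathbf{X})\mid Z=0,S=1\},$$ where $w_{1,s\bar{s}}(\mathbf{X}) = \frac{e_{s\bar{s}}(\mathbf{X})}{e_{s\bar{s}}(\mathbf{X})+e_{ss}(\mathbf{X})}\Big/\frac{\pi_{s\bar{s}}}{\pi_{s\bar{s}}+\pi_{ss}}$, $w_{0,s\bar{s}}(\mathbf{X}) = \frac{e_{s\bar{s}}(\mathbf{X})}{e_{s\bar{s}}(\mathbf{X})+e_{\bar{s}\bar{s}}(\mathbf{X})}\Big/\frac{\pi_{s\bar{s}}}{\pi_{s\bar{s}}+\pi_{\bar{s}\bar{s}}}$, $w_{0,\bar{s}\bar{s}}(\mathbf{X}) = \frac{e_{\bar{s}\bar{s}}(\mathbf{X})}{e_{s\bar{s}}(\mathbf{X})+e_{\bar{s}\bar{s}}(\mathbf{X})}\Big/\frac{\pi_{\bar{s}\bar{s}}}{\pi_{s\bar{s}}+\pi_{\bar{s}\bar{s}}}$,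 $w_{1,ss}(\mathbf{X}) = \frac{e_{ss}(\mathbf{X})}{e_{s\bar{s}}(\mathbf{X})+e_{ss}(\mathbf{X})}\Big/\frac{\pi_{ss}}{\pi_{s\bar{s}}+\pi_{ss}}$.
   Context: The principal stratum is $U=(S(1),S(0))$, whose values $(1,1),(1,0),(0,1),(0,0)$ are labelled $ss, s\bar{s}, \bar{s}s, \bar{s}\bar{s}$. Principal scores: $e_u(\mathbf{X}) = \Pr(U=u\mid \mathbf{X})$; proportions $\pi_u=\Pr(U=u)$. All conditioning events and denominators are assumed positive. *)

From HB Require Import structures.
From mathcomp Require Import all_boot all_order all_algebra.
From mathcomp Require Import all_classical all_reals all_analysis.
Set Implicit Arguments. Unset Strict Implicit. Unset Printing Implicit Defensive.
Import Order.TTheory GRing.Theory Num.Theory.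
Local Open Scope classical_set_scope.
Local Open Scope ring_scope.

Section Defs.
Context {R : realType} {d dX : measure_display}
  {T : measurableType d} {XT : measurableType dX}.

Definition cond_exp (P : probability T R) (A : set T) (Y : T -> R) : R :=
  Rintegral P A Y / fine (P A).

Definition stratum (S1 S0 : T -> bool) (u : bool * bool) : set T :=
  [set w | (S1 w, S0 w) = u].

Definition ss : bool * bool := (true, true).
Definition ssbar : bool * bool := (true, false).
Definition sbars : bool * bool := (false, true).
Definition sbarsbar : bool * bool := (false, false).

Definition pi_u (P : probability T R) (S1 S0 : T -> bool) (u : bool * bool) : R :=
  fine (P (stratum S1 S0 u)).

(* e : XT -> R is (a version of) the conditional probability Pr(A | X),
   i.e. e(X) is an integrable sigma(X)-measurable r.v. with
   E[e(X) 1_{X in B}] = P(A /\ X in B) for every measurable B. *)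
Definition is_cond_prob_given (P : probability T R) (X : T -> XT)
    (A : set T) (e : XT -> R) : Prop :=
  [/\ measurable_fun setT e,
      P.-integrable setT (EFin \o (e \o X)) &
      forall B : set XT, measurable B ->
        P (A `&` X @^-1` B) = (\int[P]_(w in X @^-1` B) (e (X w))%:E)%E].

Definition indep_Z (P : probability T R) (Z S1 S0 : T -> bool) (X : T -> XT)
  : Prop :=
  forall (b : bool) (u : bool * bool) (B : set XT), measurable B ->
    P ([set w | Z w = b] `&` (stratum S1 S0 u `&` X @^-1` B)) =
    (P [set w | Z w = b] * P (stratum S1 S0 u `&` X @^-1` B))%E.

Definition S_obs (Z S1 S0 : T -> bool) (w : T) : bool :=
  if Z w then S1 w else S0 w.

Definition ev (Z S1 S0 : T -> bool) (z s : bool) : set T :=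
  [set w | Z w = z /\ S_obs Z S1 S0 w = s].

End Defs.

(* weights; e : principal scores indexed by strata, pi : proportions *)
Section Weights.
Context {R : realType} {XT : Type}.
Variables (e : bool * bool -> XT -> R) (pi : bool * bool -> R).

Definition w1_ssbar (x : XT) : R :=
  (e ssbar x / (e ssbar x + e ss x)) / (pi ssbar / (pi ssbar + pi ss)).
Definition w0_ssbar (x : XT) : R :=
  (e ssbar x / (e ssbar x + e sbarsbar x)) / (pi ssbar / (pi ssbar + pi sbarsbar)).
Definition w0_sbarsbar (x : XT) : R :=
  (e sbarsbar x / (e ssbar x + e sbarsbar x)) / (pi sbarsbar / (pi ssbar + pi sbarsbar)).
Definition w1_ss (x : XT) : R :=
  (e ss x / (e ssbar x + e ss x)) / (pi ss / (pi ssbar + pi ss)).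
End Weights.

From HB Require Import structures.
From mathcomp Require Import all_boot all_order all_algebra.
From mathcomp Require Import all_classical all_reals all_analysis.
From mathcomp Require Import measurable_realfun.
From mathcomp.algebra_tactics Require Import ring.
Import Order.TTheory GRing.Theory Num.Theory.
Local Open Scope classical_set_scope.
Local Open Scope ring_scope.

(* For every (z, s) the event E = {Z = z, S = s} is {Z = z} intersected with
   the union of two principal strata u1, u2. By independence of Z, the measure
   B |-> P(E, X in B) has density P(Z = z) (e_u1 + e_u2) with respect to the
   law of X, and transferring integrals from P restricted to E to the law of X
   (a Radon-Nikodym argument) gives, for g with g (e_u1 + e_u2) = K1 h e_u1 +
   K2 h e_u2,
     E[g(X) | E] = (K1 E[h e_u1] + K2 E[h e_u2]) / (pi_u1 + pi_u2),
   where E[h e_u] is taken under the law of X. Each weight is chosen so that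
   only one score survives, and monotonicity makes the stratum (0,1) null, so
   both sides of every identity reduce to E[h e_u] / pi_u for one stratum u. *)

Lemma measurable_invr (R : realType) : measurable_fun setT (@GRing.inv R).
Proof.
rewrite (_ : setT = ~` [set 0] `|` [set 0]); last first.
  by apply/seteqP; split => x //= _; have [->|/eqP] := eqVneq x 0; [right|left].
apply/measurable_funU => //; first exact: measurableC.
split; last exact: measurable_fun_set1.
apply: open_continuous_measurable_fun.
  by rewrite openC; apply: accessible_closed_set1; exact: hausdorff_accessible.
by move=> x /set_mem /eqP x0; exact: inv_continuous.
Qed.

Lemma measurable_eqb d (T : measurableType d) (f : T -> bool) (b : bool) :
  measurable [set w | f w] -> measurable [set w | f w = b].
Proof.
case: b => // mf; rewrite (_ : [set w | f w = false] = ~` [set w | f w]).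
  exact: measurableC.
by apply/seteqP; split => w /=; case: (f w).
Qed.

Section image_measure.
Local Open Scope ereal_scope.
Context {d1 d2} {T1 : measurableType d1} {T2 : measurableType d2} {R : realType}.
Context (mu : {finite_measure set T1 -> \bar R}) {f : T1 -> T2}.

(* The measurability proof is an argument so that the measure structure
   declared below can be found by inference. *)
Definition image_measure of measurable_fun setT f := pushforward mu f.

Hypothesis mf : measurable_fun setT f.
Local Notation nu := (image_measure mf).

Let image0 : nu set0 = 0. Proof. exact: measure0. Qed.
Let image_ge0 B : 0 <= nu B. Proof. exact: measure_ge0. Qed.
Let image_sigma_additive : semi_sigma_additive nu.
Proof. exact: measure_semi_sigma_additive. Qed.
HB.instance Definition _ := isMeasure.Build _ _ _ nu
  image0 image_ge0 image_sigma_additive.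

Let image_fin : fin_num_fun nu.
Proof.
by move=> B mB; apply: fin_num_measure; rewrite -[X in measurable X]setTI; exact: mf.
Qed.
HB.instance Definition _ := Measure_isFinite.Build _ _ _ nu image_fin.

End image_measure.

Section integral_density.
Local Open Scope ereal_scope.
Context {d} {T : measurableType d} {R : realType}.
Context {mu : {sigma_finite_measure set T -> \bar R}}
  {nu : {finite_measure set T -> \bar R}} {c : T -> R}.
Hypotheses (mc : measurable_fun setT c)
  (nuE : forall B, measurable B -> nu B = \int[mu]_(x in B) (c x)%:E).

Let nu_dom : nu `<< mu.
Proof.
apply/null_content_dominatesP => A mA muA.
by rewrite nuE // null_set_integral //; apply/measurable_EFinP; exact: measurable_funTS.
Qed.

Let RN_density : ae_eq mu setT (Radon_Nikodym_SigmaFinite.f nu mu) (EFin \o c).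
Proof.
apply: integral_ae_eq => //.
- exact: Radon_Nikodym_SigmaFinite.f_integrable.
- exact/measurable_EFinP.
- move=> E _ mE; rewrite -Radon_Nikodym_SigmaFinite.f_integral //.
  by rewrite nuE.
Qed.

Lemma density_ae_ge0 : {ae mu, forall x, (0 <= c x)%R}.
Proof.
apply: filterS RN_density => x /(_ I) /= RNc; rewrite -lee_fin -RNc.
exact: Radon_Nikodym_SigmaFinite.f_ge0.
Qed.

Lemma ge0_integral_density (g : T -> \bar R) :
  measurable_fun setT g -> (forall x, 0 <= g x) ->
  \int[nu]_x g x = \int[mu]_x (g x * (c x)%:E).
Proof.
move=> mg g0.
rewrite -(Radon_Nikodym_SigmaFinite.change_of_variables nu_dom) //.
apply: ae_eq_integral => //.
- apply: emeasurable_funM => //.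
  exact: measurable_int (Radon_Nikodym_SigmaFinite.f_integrable nu_dom).
- by apply: emeasurable_funM => //; exact/measurable_EFinP.
- exact: ae_eqe_mul2l.
Qed.

Lemma integral_density (g : T -> \bar R) : nu.-integrable setT g ->
  \int[nu]_x g x = \int[mu]_x (g x * (c x)%:E).
Proof.
move=> ig.
rewrite -(Radon_Nikodym_change_of_variables nu_dom) //.
have mg := measurable_int _ ig.
apply: ae_eq_integral => //.
- by apply: emeasurable_funM => //; exact: measurable_int.
- by apply: emeasurable_funM => //; exact/measurable_EFinP.
- apply: ae_eqe_mul2l; apply: ae_eq_trans RN_density.
  exact/ae_eq_sym/ae_eq_Radon_Nikodym_SigmaFinite.
Qed.

End integral_density.

Section integral_mrestr.
Local Open Scope ereal_scope.
Context {d} {T : measurableType d} {R : realType}.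
Context (mu : {finite_measure set T -> \bar R}) {A : set T} (mA : measurable A).

Let mrestr_density E : measurable E ->
  mrestr mu mA E = \int[mu]_(x in E) (\1_A x)%:E.
Proof. by move=> mE; rewrite integral_indic // setIC. Qed.

Let mindic : measurable_fun setT (\1_A : T -> R).
Proof. exact: measurable_indic. Qed.

Let mule_indic (F : T -> \bar R) x : F x * (\1_A x)%:E = (F \_ A) x.
Proof. by rewrite patchE indicE; case: ifPn => _; rewrite ?mule1 ?mule0. Qed.

Lemma ge0_integral_mrestr (F : T -> \bar R) :
  measurable_fun setT F -> (forall x, 0 <= F x) ->
  \int[mrestr mu mA]_x F x = \int[mu]_(x in A) F x.
Proof.
move=> mF F0; rewrite (ge0_integral_density mindic mrestr_density) //.
by rewrite [RHS]integral_mkcond; apply: eq_integral => x _; rewrite mule_indic.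
Qed.

Lemma integrable_mrestr (F : T -> \bar R) :
  measurable_fun setT F -> mu.-integrable A F -> (mrestr mu mA).-integrable setT F.
Proof.
move=> mF /integrableP [_ iF]; apply/integrableP; split => //.
by rewrite ge0_integral_mrestr //; exact: measurableT_comp.
Qed.

Lemma integral_mrestr (F : T -> \bar R) :
  measurable_fun setT F -> mu.-integrable A F ->
  \int[mrestr mu mA]_x F x = \int[mu]_(x in A) F x.
Proof.
move=> mF iF; rewrite (integral_density mindic mrestr_density).
  by rewrite [RHS]integral_mkcond; apply: eq_integral => x _; rewrite mule_indic.
exact: integrable_mrestr.
Qed.

End integral_mrestr.

Section integral_comp_density.
Local Open Scope ereal_scope.
Context {d dX} {T : measurableType d} {XT : measurableType dX} {R : realType}.
Context {P : {finite_measure set T -> \bar R}} {X : T -> XT}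
  (mX : measurable_fun setT X) {mu : {sigma_finite_measure set XT -> \bar R}}
  {A : set T} (mA : measurable A) {c : XT -> R}.
Hypotheses (mc : measurable_fun setT c)
  (cE : forall B, measurable B -> P (A `&` X @^-1` B) = \int[mu]_(x in B) (c x)%:E).

Local Notation nu := (image_measure (mrestr P mA) mX).

Let nuE B : measurable B -> nu B = \int[mu]_(x in B) (c x)%:E.
Proof. by move=> mB; rewrite -cE // setIC. Qed.

Lemma comp_density_ae_ge0 : {ae mu, forall x, (0 <= c x)%R}.
Proof. exact: density_ae_ge0 mc nuE. Qed.

Lemma ge0_integral_comp_density (g : XT -> \bar R) :
  measurable_fun setT g -> (forall x, 0 <= g x) ->
  \int[P]_(w in A) g (X w) = \int[mu]_x (g x * (c x)%:E).
Proof.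
move=> mg g0; rewrite -(ge0_integral_density mc nuE) //.
rewrite /image_measure ge0_integral_pushforward // preimage_setT.
rewrite ge0_integral_mrestr //.
- exact: (measurableT_comp mg mX).
- by move=> x; exact: g0.
Qed.

Lemma integral_comp_density (g : XT -> \bar R) :
  measurable_fun setT g -> P.-integrable A (g \o X) ->
  \int[P]_(w in A) g (X w) = \int[mu]_x (g x * (c x)%:E).
Proof.
move=> mg ig; have mgX : measurable_fun setT (g \o X) by exact: measurableT_comp.
have imrestr : (mrestr P mA).-integrable (X @^-1` setT) (g \o X).
  by rewrite preimage_setT; exact: integrable_mrestr.
rewrite -(integral_density mc nuE); last exact: integrable_pushforward.
rewrite /image_measure integral_pushforward // preimage_setT.
by rewrite (integral_mrestr P mA _ mgX ig).
Qed.

Lemma integrable_comp_densityE (g : XT -> R) : measurable_fun setT g ->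
  P.-integrable A (EFin \o (g \o X)) <->
  mu.-integrable setT (fun x => (g x * c x)%:E).
Proof.
move=> mg; have mEg : measurable_fun setT (EFin \o g) by exact/measurable_EFinP.
have abs_integral : \int[P]_(w in A) `|(g (X w))%:E| = \int[mu]_x `|(g x * c x)%:E|.
  rewrite (ge0_integral_comp_density (fun x => `|(g x)%:E|)) //; last first.
    exact: measurableT_comp.
  apply: ae_eq_integral => //.
  - by apply: emeasurable_funM; [exact: measurableT_comp|exact/measurable_EFinP].
  - by apply/measurableT_comp => //; apply/measurable_EFinP; exact: measurable_funM.
  apply: filterS comp_density_ae_ge0 => x c0 _.
  by rewrite !abse_EFin -EFinM normrM (ger0_norm c0).
have mgX : measurable_fun A (EFin \o (g \o X)).
  by apply: measurable_funTS; apply: measurableT_comp => //; exact: measurableT_comp.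
have mgc : measurable_fun setT (fun x => (g x * c x)%:E).
  by apply/measurable_EFinP; exact: measurable_funM.
split => /integrableP [_ fin]; apply/integrableP; split => //.
  by rewrite -abs_integral.
by rewrite abs_integral.
Qed.

End integral_comp_density.

Section principal_strata.
Context {R : realType} {d dX : measure_display} {T : measurableType d}
  {XT : measurableType dX} {P : probability T R} {Z S1 S0 : T -> bool}
  {X : T -> XT} {e : bool * bool -> XT -> R} {h : XT -> R}.
Hypotheses (mZ : measurable [set w | Z w]) (mS1 : measurable [set w | S1 w])
  (mS0 : measurable [set w | S0 w]) (mX : measurable_fun setT X)
  (indepZ : indep_Z P Z S1 S0 X)
  (scoreE : forall u, is_cond_prob_given P X (stratum S1 S0 u) (e u))
  (mh : measurable_fun setT h) (ih : P.-integrable setT (EFin \o (h \o X))).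

HB.instance Definition _ := isMeasurableFun.Build _ _ _ _ X mX.
Local Notation law := (distribution P X).
Local Notation pi := (pi_u P S1 S0).

Let measure_fineK A : measurable A -> P A = (fine (P A))%:E.
Proof. by move=> mA; rewrite fineK ?fin_num_measure. Qed.

Lemma measurable_stratum u : measurable (stratum S1 S0 u).
Proof.
case: u => a b.
rewrite (_ : stratum _ _ _ = [set w | S1 w = a] `&` [set w | S0 w = b]).
  by apply: measurableI; exact: measurable_eqb.
by apply/seteqP; split => w; rewrite /stratum /=; [case=> -> ->|case=> -> ->].
Qed.

Lemma stratum_disjoint u v : u != v ->
  stratum S1 S0 u `&` stratum S1 S0 v = set0.
Proof.
move=> uv; apply/seteqP; split => // w [/= wu wv].
by move: uv; rewrite -wu -wv eqxx.
Qed.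

Lemma measurable_score u : measurable_fun setT (e u).
Proof. by case: (scoreE u). Qed.

Lemma measurable_weight u v w (k : R) :
  measurable_fun setT (fun x => e u x / (e v x + e w x) / k * h x).
Proof.
apply: measurable_funM => //; apply: measurable_funM => //.
apply: measurable_funM; first exact: measurable_score.
apply: measurableT_comp (measurable_invr R) _.
by apply: measurable_funD; exact: measurable_score.
Qed.

Lemma stratum_density u B : measurable B ->
  P (stratum S1 S0 u `&` X @^-1` B) = (\int[law]_(x in B) (e u x)%:E)%E.
Proof.
move=> mB; case: (scoreE u) => meu ieu ->//.
rewrite /distribution integral_pushforward //; first exact/measurable_EFinP.
by apply: integrableS ieu => //; rewrite -[X in measurable X]setTI; exact: mX.
Qed.

Lemma integrable_score u : law.-integrable setT (EFin \o e u).
Proof.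
case: (scoreE u) => meu ieu _; apply: integrable_pushforward => //.
exact/measurable_EFinP.
Qed.

Let integrable_h_stratum u : P.-integrable (stratum S1 S0 u) (EFin \o (h \o X)).
Proof. exact: integrableS measurableT (measurable_stratum u) (subsetT _) ih. Qed.

Lemma integrable_h_score u :
  law.-integrable setT (EFin \o (fun x => h x * e u x)).
Proof.
exact/(integrable_comp_densityE mX (measurable_stratum u) (measurable_score u)
  (stratum_density u)).
Qed.

Lemma score_null u : P (stratum S1 S0 u) = 0%E -> \int[law]_x (h x * e u x) = 0.
Proof.
move=> Pu0; have mEh : measurable_fun setT (EFin \o h) by exact/measurable_EFinP.
have := integral_comp_density mX (measurable_stratum u) (measurable_score u)
  (stratum_density u) _ mEh (integrable_h_stratum u).
rewrite null_set_integral //; [|exact: measurable_stratum|].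
  move=> null_integral; rewrite /Rintegral.
  by under eq_integral do rewrite EFinM; rewrite -null_integral.
exact/measurable_funTS/measurableT_comp.
Qed.

Definition ev_strata (z s : bool) : (bool * bool) * (bool * bool) :=
  if z then ((s, true), (s, false)) else ((true, s), (false, s)).

Lemma evE z s : ev Z S1 S0 z s = [set w | Z w = z] `&`
  (stratum S1 S0 (ev_strata z s).1 `|` stratum S1 S0 (ev_strata z s).2).
Proof.
apply/seteqP; split => w; rewrite /ev /S_obs /stratum /=;
  by case: z s (Z w) (S1 w) (S0 w) => [] [] [] [] [] /=; intuition congruence.
Qed.

Section event.
Variables z s : bool.
Local Notation u1 := (ev_strata z s).1.
Local Notation u2 := (ev_strata z s).2.
Local Notation E := (ev Z S1 S0 z s).
Local Notation pZ := (fine (P [set w | Z w = z])).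

Let mZz : measurable [set w | Z w = z].
Proof. exact: measurable_eqb. Qed.

Lemma measurable_ev : measurable E.
Proof.
by rewrite evE; apply: measurableI => //; apply: measurableU; exact: measurable_stratum.
Qed.

Let ev_split B : measurable B -> P (E `&` X @^-1` B) =
  (P ([set w | Z w = z] `&` (stratum S1 S0 u1 `&` X @^-1` B)) +
   P ([set w | Z w = z] `&` (stratum S1 S0 u2 `&` X @^-1` B)))%E.
Proof.
move=> mB; have mXB : measurable (X @^-1` B).
  by rewrite -[X in measurable X]setTI; exact: mX.
rewrite evE -setIA setIUl setIUr measureU //.
- by apply: measurableI => //; apply: measurableI => //; exact: measurable_stratum.
- by apply: measurableI => //; apply: measurableI => //; exact: measurable_stratum.
have u12 : u1 != u2 by case: z s => [] [].
apply/seteqP; split => // w [[_ [w1 _]] [_ [w2 _]]].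
by rewrite -(stratum_disjoint _ _ u12).
Qed.

Lemma ev_density B : measurable B -> P (E `&` X @^-1` B) =
  (\int[law]_(x in B) (pZ * (e u1 x + e u2 x))%R%:E)%E.
Proof.
move=> mB.
have iscore u : law.-integrable B (fun x => (pZ * e u x)%:E).
  under eq_fun do rewrite EFinM.
  by apply: integrableZl => //; exact: integrableS (integrable_score u).
have Zstratum u : P ([set w | Z w = z] `&` (stratum S1 S0 u `&` X @^-1` B)) =
    (\int[law]_(x in B) (pZ * e u x)%:E)%E.
  rewrite indepZ // stratum_density // (measure_fineK _ mZz).
  rewrite [RHS](eq_integral (fun x => pZ%:E * (e u x)%:E)%E) => [|x _].
    by rewrite integralZl //; exact: integrableS (integrable_score u).
  exact: EFinM.
rewrite ev_split // !Zstratum -integralD //.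
by apply: eq_integral => x _; rewrite -EFinD mulrDr.
Qed.

Lemma ev_prob : fine (P E) = pZ * (pi u1 + pi u2).
Proof.
have := ev_split setT measurableT; rewrite !indepZ // !preimage_setT !setIT => ->.
rewrite (measure_fineK _ mZz) (measure_fineK _ (measurable_stratum u1)).
by rewrite (measure_fineK _ (measurable_stratum u2)) -!EFinM -EFinD /= mulrDr.
Qed.

Let integrable_h_scoreZ K u :
  law.-integrable setT (EFin \o (fun x => K * (h x * e u x))).
Proof. exact: (eq_integrable _ _ _ _ (integrableZl _ K (integrable_h_score u))). Qed.

Let integrable_h_score_comb K1 K2 u v : law.-integrable setT
  (EFin \o (fun x => K1 * (h x * e u x) + K2 * (h x * e v x))).
Proof.
exact: (eq_integrable _ _ _ _
  (integrableD _ (integrable_h_scoreZ K1 u) (integrable_h_scoreZ K2 v))).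
Qed.

Lemma Rintegral_ev (g : XT -> R) (K1 K2 : R) : measurable_fun setT g ->
  (forall x, g x * (e u1 x + e u2 x) = K1 * (h x * e u1 x) + K2 * (h x * e u2 x)) ->
  Rintegral P E (fun w => g (X w)) =
  pZ * (K1 * \int[law]_x (h x * e u1 x) + K2 * \int[law]_x (h x * e u2 x)).
Proof.
move=> mg gK; pose c x := pZ * (e u1 x + e u2 x).
have mc : measurable_fun setT c.
  by apply: measurable_funM => //; apply: measurable_funD; exact: measurable_score.
have gc x : g x * c x = pZ * (K1 * (h x * e u1 x) + K2 * (h x * e u2 x)).
  by rewrite /c mulrCA gK.
have mEg : measurable_fun setT (EFin \o g) by exact/measurable_EFinP.
have igX : P.-integrable E (EFin \o (g \o X)).
  apply/(integrable_comp_densityE mX measurable_ev mc ev_density _ mg).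
  apply: (eq_integrable _ _ _ _ (integrableZl _ pZ
    (integrable_h_score_comb K1 K2 u1 u2))) => //= x _.
  by rewrite gc.
rewrite /Rintegral (integral_comp_density mX measurable_ev mc ev_density _ mEg igX).
rewrite [LHS](_ : _ = \int[law]_x (g x * c x)) // (eq_Rintegral _ (fun x _ => gc x)).
by rewrite RintegralZl ?RintegralD ?RintegralZl //; exact: integrable_h_score.
Qed.

Lemma cond_exp_ev (g : XT -> R) (K1 K2 : R) : (0 < P E)%E -> measurable_fun setT g ->
  (forall x, g x * (e u1 x + e u2 x) = K1 * (h x * e u1 x) + K2 * (h x * e u2 x)) ->
  cond_exp P E (fun w => g (X w)) =
  (K1 * \int[law]_x (h x * e u1 x) + K2 * \int[law]_x (h x * e u2 x)) / (pi u1 + pi u2).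
Proof.
move=> PE0 mg gK; have pZ0 : pZ != 0.
  apply/lt0r_neq0/fine_gt0/andP; split.
    apply: lt_le_trans PE0 _; apply: le_measure; rewrite ?inE //.
      exact: measurable_ev.
    by rewrite evE => w [].
  by rewrite (measure_fineK _ mZz) ltry.
by rewrite /cond_exp (Rintegral_ev _ _ _ mg gK) ev_prob -mulf_div divff ?mul1r.
Qed.

End event.

End principal_strata.

Theorem corollary2 (R : realType) (d dX : measure_display)
  (T : measurableType d) (XT : measurableType dX) (P : probability T R)
  (Z S1 S0 : T -> bool) (X : T -> XT) (e : bool * bool -> XT -> R)
  (h : XT -> R) :
  measurable [set w | Z w] -> measurable [set w | S1 w] ->
  measurable [set w | S0 w] -> measurable_fun setT X ->
  indep_Z P Z S1 S0 X ->
  (* monotonicity: S(1) >= S(0) almost surely *)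
  P (stratum S1 S0 sbars) = 0%E ->
  (* principal scores e_u(X) = Pr(U = u | X) *)
  (forall u, is_cond_prob_given P X (stratum S1 S0 u) (e u)) ->
  (* h of the covariates with finite moments *)
  measurable_fun setT h -> P.-integrable setT (EFin \o (h \o X)) ->
  (* conditioning events and denominators positive *)
  (forall z s : bool, (0 < P (ev Z S1 S0 z s))%E) ->
  0 < pi_u P S1 S0 ss -> 0 < pi_u P S1 S0 ssbar -> 0 < pi_u P S1 S0 sbarsbar ->
  (forall x, 0 < e ssbar x + e ss x) ->
  (forall x, 0 < e ssbar x + e sbarsbar x) ->
  let pi := pi_u P S1 S0 in
  [/\ cond_exp P (ev Z S1 S0 true true) (fun w => w1_ssbar e pi (X w) * h (X w))
      = cond_exp P (ev Z S1 S0 false false) (fun w => w0_ssbar e pi (X w) * h (X w)),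
      cond_exp P (ev Z S1 S0 true false) (fun w => h (X w))
      = cond_exp P (ev Z S1 S0 false false) (fun w => w0_sbarsbar e pi (X w) * h (X w))
    & cond_exp P (ev Z S1 S0 true true) (fun w => w1_ss e pi (X w) * h (X w))
      = cond_exp P (ev Z S1 S0 false true) (fun w => h (X w))].
Proof.
move=> mZ mS1 mS0 mX indepZ mono scoreE mh ih ev_gt0 pss psb pbb den1 den0 pi.
have ce := cond_exp_ev mZ mS1 mS0 mX indepZ scoreE mh ih.
have mw := measurable_weight scoreE mh.
have w1_ssbarE x : w1_ssbar e pi x * h x * (e ss x + e ssbar x) =
    0 * (h x * e ss x) + (pi ssbar + pi ss) / pi ssbar * (h x * e ssbar x).
  by rewrite /w1_ssbar; field; rewrite !lt0r_neq0 ?den1 ?den0 ?addr_gt0.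
have w0_ssbarE x : w0_ssbar e pi x * h x * (e ssbar x + e sbarsbar x) =
    (pi ssbar + pi sbarsbar) / pi ssbar * (h x * e ssbar x) + 0 * (h x * e sbarsbar x).
  by rewrite /w0_ssbar; field; rewrite !lt0r_neq0 ?den1 ?den0 ?addr_gt0.
have w0_sbarsbarE x : w0_sbarsbar e pi x * h x * (e ssbar x + e sbarsbar x) =
    0 * (h x * e ssbar x) +
    (pi ssbar + pi sbarsbar) / pi sbarsbar * (h x * e sbarsbar x).
  by rewrite /w0_sbarsbar; field; rewrite !lt0r_neq0 ?den1 ?den0 ?addr_gt0.
have w1_ssE x : w1_ss e pi x * h x * (e ss x + e ssbar x) =
    (pi ssbar + pi ss) / pi ss * (h x * e ss x) + 0 * (h x * e ssbar x).
  by rewrite /w1_ss; field; rewrite !lt0r_neq0 ?den1 ?den0 ?addr_gt0.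
have hE u v x : h x * (e u x + e v x) = 1 * (h x * e u x) + 1 * (h x * e v x).
  by ring.
have pi0 : pi_u P S1 S0 sbars = 0 by rewrite /pi_u mono.
have E0 := score_null mS1 mS0 mX scoreE mh ih _ mono.
rewrite (ce true true _ _ _ (ev_gt0 _ _) (mw _ _ _ _) w1_ssbarE).
rewrite (ce false false _ _ _ (ev_gt0 _ _) (mw _ _ _ _) w0_ssbarE).
rewrite (ce true false _ _ _ (ev_gt0 _ _) mh (hE _ _)).
rewrite (ce false false _ _ _ (ev_gt0 _ _) (mw _ _ _ _) w0_sbarsbarE).
rewrite (ce true true _ _ _ (ev_gt0 _ _) (mw _ _ _ _) w1_ssE).
rewrite (ce false true _ _ _ (ev_gt0 _ _) mh (hE _ _)) /= pi0 E0.
by rewrite /pi; split; field; rewrite !lt0r_neq0 ?addr_gt0.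
Qed.
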